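(* Let $g(\cdot)$ be a (parameterized) feature encoder mapping sequences to $\mathbb{R}^d$ and let $T_1,\dots,T_K:\mathbb{R}^d\to\mathbb{R}^d$ be (parameterized) transformation networks, and consider the contextual discriminative contrastive loss $\mathcal{L}_{\text{cdcl}}=\mathcal{L}_{\text{cncl}}+\mathcal{L}_{\text{dcl}}$ defined in the context. If there exists a choice of parameters for $g$ and $T_1,\dots,T_K$ such that $\mathcal{L}_{\text{cdcl}}<K\log K$, then for any nonzero $c\in\mathbb{R}^d$, the constant parameter setting in which $T_k(g(x))=g(x)=c$ for all inputs $x$ and all $k=1,\dots,K$ is not an optimal solution for minimizing $\mathcal{L}_{\text{cdcl}}$.
   Context: A multivariate time series $X\in\mathbb{R}^{N\times T}$ is given; $X_{\cdot,i}\in\mathbb{R}^N$ is its value at time $i$. The training set $\mathcal{D}$ consists of windows $X^t=\{X_{\cdot,i}\}_{i=t-w+1}^{t}$ extracted with stride 1, each split into a context sequence $C^t=\{X_{\cdot,i}\}_{i=t-w+1}^{t-p}$ and a suspect sequence $S^t=\{X_{\cdot,i}\}_{i=t-c}^{t}$ of equal length (here $p$ and the sequence length are hyperparameters). Set $O^t=g(S^t)$, $G^t=g(C^t)$, and $O^{t,k}=T_k(O^t)$ for $k=1,\dots,K$. For a temperature $\tau>0$ define $h(a,b)=\exp\!\big(\mathrm{sim}(a,b)/\tau\big)$, where $\mathrm{sim}(a,b)=\frac{a^\top b}{\|a\|_2\|b\|_2}$ is cosine similarity. The losses are $$\mathcal{L}_{\text{dcl}}=-\mathbb{E}_{X^t\sim\mathcal{D}}\sum_{k=1}^K\log\frac{h(O^t,O^{t,k})}{h(O^t,O^{t,k})+\sum_{l\neq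 k}h(O^{t,k},O^{t,l})},\qquad \mathcal{L}_{\text{cncl}}=\mathbb{E}_{X^t\sim\mathcal{D}}\sum_{k=1}^K\|O^{t,k}-G^t\|_2^2,$$ and $\mathcal{L}_{\text{cdcl}}=\mathcal{L}_{\text{cncl}}+\mathcal{L}_{\text{dcl}}$. *)

From HB Require Import structures.
From mathcomp Require Import all_boot all_order all_algebra.
From mathcomp Require Import all_classical all_reals all_analysis.
Set Implicit Arguments. Unset Strict Implicit. Unset Printing Implicit Defensive.
Import Order.TTheory GRing.Theory Num.Theory.
Local Open Scope ring_scope.

Section CDCL.
Variable R : realType.

Definition dotv (d : nat) (a b : 'rV[R]_d) : R := \sum_(i < d) a 0 i * b 0 i.
Definition normv (d : nat) (a : 'rV[R]_d) : R := Num.sqrt (dotv a a).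
(* cosine similarity (mathcomp convention x / 0 = 0 for zero vectors) *)
Definition cossim (d : nat) (a b : 'rV[R]_d) : R := dotv a b / (normv a * normv b).
Definition hsim (tau : R) (d : nat) (a b : 'rV[R]_d) : R := expR (cossim a b / tau).

(* entry (i, k) of the series X in R^{N x T}, with time index k : nat (0 outside range) *)
Definition colat (N T : nat) (X : 'M[R]_(N, T)) (i : 'I_N) (k : nat) : R :=
  match @insub nat (fun k => k < T)%N 'I_T k with Some j => X i j | None => 0 end.

Definition subsq (N T m : nat) (X : 'M[R]_(N, T)) (st : nat) : 'M[R]_(N, m) :=
  \matrix_(i < N, j < m) colat X i (st + j).

(* Windows of length w = m + p, start s (0-based); t = s + w - 1.
   Context C^t = columns t-w+1 .. t-p   = s .. s+m-1,
   Suspect S^t = columns t-m+1 .. t     = s+p .. s+p+m-1 (same length m). *)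
Definition context (N T m p : nat) (X : 'M[R]_(N, T)) (s : nat) : 'M[R]_(N, m) :=
  @subsq N T m X s.
Definition suspect (N T m p : nat) (X : 'M[R]_(N, T)) (s : nat) : 'M[R]_(N, m) :=
  @subsq N T m X (s + p).

Variables (Theta : Type) (N T m p d K : nat) (tau : R) (X : 'M[R]_(N, T))
  (enc : Theta -> 'M[R]_(N, m) -> 'rV[R]_d)
  (tr : Theta -> 'I_K -> 'rV[R]_d -> 'rV[R]_d).

Definition nwin : nat := (T - (p + m)).+1.

Definition Ovec (th : Theta) (s : nat) : 'rV[R]_d := enc th (@suspect N T m p X s).
Definition Gvec (th : Theta) (s : nat) : 'rV[R]_d := enc th (@context N T m p X s).
Definition Okvec (th : Theta) (s : nat) (k : 'I_K) : 'rV[R]_d := tr th k (Ovec th s).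

(* expectation over D = empirical mean over the nwin windows *)
Definition L_dcl (th : Theta) : R :=
  (nwin%:R)^-1 * \sum_(s < nwin)
    - \sum_(k < K) ln (hsim tau (Ovec th s) (Okvec th s k) /
        (hsim tau (Ovec th s) (Okvec th s k)
         + \sum_(l < K | l != k) hsim tau (Okvec th s k) (Okvec th s l))).

Definition L_cncl (th : Theta) : R :=
  (nwin%:R)^-1 * \sum_(s < nwin)
    \sum_(k < K) normv (Okvec th s k - Gvec th s) ^+ 2.

Definition L_cdcl (th : Theta) : R := L_cncl th + L_dcl th.

End CDCL.

From HB Require Import structures.
From mathcomp Require Import all_boot all_order all_algebra.
From mathcomp Require Import all_classical all_reals all_analysis.
Import Order.TTheory GRing.Theory Num.Theory.
Local Open Scope ring_scope.

(* When all representations equal a constant c, the consistency loss vanishes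
   and every one of the K similarity scores equals the same positive number
   h(c, c), so each softmax share is 1/K and the discriminative loss is
   exactly K log K.  A parameter with loss below K log K therefore beats the
   constant one.  None of c != 0, tau > 0 and p + m <= T is needed: the
   number of windows is a successor, so the empirical mean is never empty. *)

Section ConstantEncoder.
Variable R : realType.

Lemma normv0 (d : nat) : normv (0 : 'rV[R]_d) = 0.
Proof. by rewrite /normv /dotv big1 ?sqrtr0 // => i _; rewrite mxE mul0r. Qed.

Lemma mean_cst (n : nat) (a : R) : (n.+1%:R)^-1 * \sum_(s < n.+1) a = a.
Proof.
by rewrite sumr_const card_ord -[a *+ _]mulr_natl mulrA mulVf ?mul1r ?pnatr_eq0.
Qed.

Lemma ln_share_cst (K : nat) (k : 'I_K) (h : R) :
  0 < h -> ln (h / (h + \sum_(l < K | l != k) h)) = - ln (K%:R : R).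
Proof.
move=> h_gt0.
have -> : h + \sum_(l < K | l != k) h = \sum_(l < K) h by rewrite [RHS](bigD1 k).
rewrite sumr_const card_ord -[h *+ _]mulr_natr.
have K_gt0 : (0 < K)%N := leq_ltn_trans (leq0n k) (ltn_ord k).
by rewrite invfM mulrA divff ?gt_eqF // mul1r lnV // posrE ltr0n.
Qed.

Variables (Theta : Type) (N T m p d K : nat) (tau : R) (X : 'M[R]_(N, T))
  (enc : Theta -> 'M[R]_(N, m) -> 'rV[R]_d)
  (tr : Theta -> 'I_K -> 'rV[R]_d -> 'rV[R]_d).
Variables (c : 'rV[R]_d) (thc : Theta).
Hypothesis enc_cst : forall x, enc thc x = c.
Hypothesis tr_cst : forall k x, tr thc k (enc thc x) = c.

Let Ovec_cst s : Ovec p X enc thc s = c. Proof. exact: enc_cst. Qed.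
Let Gvec_cst s : Gvec p X enc thc s = c. Proof. exact: enc_cst. Qed.
Let Okvec_cst s k : Okvec p X enc tr thc s k = c. Proof. exact: tr_cst. Qed.

Lemma L_cncl_cst : L_cncl p X enc tr thc = 0.
Proof.
rewrite /L_cncl big1 ?mulr0 // => s _; apply: big1 => k _.
by rewrite Okvec_cst Gvec_cst subrr normv0 expr0n.
Qed.

Lemma L_dcl_cst : L_dcl p tau X enc tr thc = K%:R * ln (K%:R : R).
Proof.
have h_gt0 : 0 < hsim tau c c by apply: expR_gt0.
rewrite /L_dcl -[RHS](mean_cst (T - (p + m))); congr (_ * _).
apply: eq_bigr => s _; rewrite (eq_bigr (fun _ => - ln (K%:R : R))).
  by rewrite sumr_const card_ord mulNrn opprK mulr_natl.
move=> k _; rewrite Ovec_cst Okvec_cst.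
by under eq_bigr do rewrite Okvec_cst; rewrite ln_share_cst.
Qed.

Lemma L_cdcl_cst : L_cdcl p tau X enc tr thc = K%:R * ln (K%:R : R).
Proof. by rewrite /L_cdcl L_cncl_cst L_dcl_cst add0r. Qed.

End ConstantEncoder.

Theorem proposition2 (R : realType) (Theta : Type) (N T m p d K : nat)
  (tau : R) (X : 'M[R]_(N, T))
  (enc : Theta -> 'M[R]_(N, m) -> 'rV[R]_d)
  (tr : Theta -> 'I_K -> 'rV[R]_d -> 'rV[R]_d) :
  0 < tau -> (p + m <= T)%N ->
  (exists th : Theta, L_cdcl p tau X enc tr th < K%:R * ln (K%:R : R)) ->
  forall (c : 'rV[R]_d), c != 0 ->
  forall thc : Theta,
    (forall x, enc thc x = c) ->
    (forall (k : 'I_K) x, tr thc k (enc thc x) = c) ->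
    ~ (forall th : Theta,
         L_cdcl p tau X enc tr thc <= L_cdcl p tau X enc tr th).
Proof.
move=> _ _ [th th_lt] c _ thc enc_cst tr_cst thc_opt.
have := thc_opt th.
rewrite (@L_cdcl_cst _ _ _ _ _ p _ _ tau X _ _ c thc enc_cst tr_cst).
by rewrite leNgt th_lt.
Qed.
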